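(* Let a finitely generated group $\Gamma$ act freely and properly on a locally compact space $X$. Then the Hurder compactification $\tilde X$ is a $\Gamma$-equivariant compactification of $X$ (the action extends continuously) on whose corona $\partial_\Gamma X$ the group $\Gamma$ acts trivially, and it is the maximal such compactification: for every compactification $\bar X$ of $X$ to which the $\Gamma$-action extends continuously and such that every point of $\bar X\setminus X$ is fixed by $\Gamma$, the identity of $X$ extends to a continuous map $\tilde X\to\bar X$.
   Context: Fix a finite symmetric generating set $S$ of $\Gamma$ with word length $\|\cdot\|_S$. For a continuous $f:X\to\mathbb{R}$ and $R>0$, $\Gamma\text{-}var_R(f)(x)=\max\{|f(x)-f(\gamma x)|:\|\gamma\|_S\le R\}$. The Hurder compactification $\tilde X$ is the compactification of $X$ determined by the algebra of bounded continuous functions $f$ on $X$ such that for every $R>0$, $\Gamma\text{-}var_R(f)(x)\to 0$ as $x\to\infty$; its corona is $\partial_\Gamma X=\tilde X\setminus X$. *)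

From HB Require Import structures.
From mathcomp Require Import all_boot all_order all_algebra.
From mathcomp Require Import all_classical all_reals all_analysis.
Import Order.TTheory GRing.Theory Num.Theory.
Import numFieldNormedType.Exports.

Set Implicit Arguments.
Unset Strict Implicit.
Unset Printing Implicit Defensive.

Local Open Scope classical_set_scope.
Local Open Scope ring_scope.

Definition is_action (G : groupType) (T : Type) (a : G -> T -> T) : Prop :=
  (forall x, a 1%g x = x) /\ (forall g h x, a (g * h)%g x = a g (a h x)).

Definition continuous_action (G : groupType) (T : topologicalType)
    (a : G -> T -> T) : Prop :=
  is_action a /\ (forall g, continuous (a g)).

Definition free_action (G : groupType) (T : Type) (a : G -> T -> T) : Prop :=
  forall g x, a g x = x -> g = 1%g.

Definition proper_action (G : groupType) (T : topologicalType)
    (a : G -> T -> T) : Prop :=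
  forall K : set T, compact K ->
    finite_set [set g : G | (a g @` K) `&` K !=set0].

Definition word_prod (G : groupType) (w : seq G) : G :=
  foldr (fun s t => (s * t)%g) 1%g w.

Definition symmetric_generating (G : groupType) (S : seq G) : Prop :=
  (forall s, s \in S -> (s^-1)%g \in S) /\
  (forall g : G, exists w : seq G, all (fun s => s \in S) w /\ word_prod w = g).

(* ||g||_S <= r, where ||g||_S is the minimal length of a word in S
   representing g *)
Definition wordlen_le (R : realType) (G : groupType) (S : seq G) (r : R)
    (g : G) : Prop :=
  exists w : seq G,
    [/\ all (fun s => s \in S) w, word_prod w = g & (size w)%:R <= r].

Definition Gvar (R : realType) (G : groupType) (X : Type) (a : G -> X -> X)
    (S : seq G) (r : R) (f : X -> R) (x : X) : R :=
  sup [set `|f x - f (a g x)| | g in [set g | wordlen_le S r g]].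

Definition vanishes_at_infinity (R : realType) (X : topologicalType)
    (h : X -> R) : Prop :=
  forall e : R, 0 < e ->
    exists K : set X, compact K /\ (forall x, ~ K x -> `|h x| < e).

Definition bounded_continuous (R : realType) (X : topologicalType)
    (f : X -> R) : Prop :=
  continuous f /\ (exists M : R, forall x, `|f x| <= M).

Definition hurder_fun (R : realType) (G : groupType) (X : topologicalType)
    (a : G -> X -> X) (S : seq G) (f : X -> R) : Prop :=
  bounded_continuous f /\
  (forall r : R, 0 < r -> vanishes_at_infinity (Gvar a S r f)).

Definition compactification (X K : topologicalType) (j : X -> K) : Prop :=
  [/\ compact [set: K], hausdorff_space K, continuous j,
      injective j /\
      (forall U : set X, open U ->
         exists V : set K, open V /\ j @` U = V `&` range j)
    & dense (range j)].

(* the compactification (K, j) is the one determined by the algebra A of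
   bounded continuous functions on X: A is exactly the set of functions on X
   that extend continuously to K *)
Definition determined_by (R : realType) (X K : topologicalType) (j : X -> K)
    (A : (X -> R) -> Prop) : Prop :=
  forall f : X -> R, A f <-> exists g : K -> R, continuous g /\ f = g \o j.

Definition extends_action (G : groupType) (X K : topologicalType)
    (a : G -> X -> X) (j : X -> K) (b : G -> K -> K) : Prop :=
  continuous_action b /\ (forall g x, b g (j x) = j (a g x)).

Definition trivial_on_corona (G : groupType) (X K : topologicalType)
    (j : X -> K) (b : G -> K -> K) : Prop :=
  forall g y, ~ range j y -> b g y = y.

From HB Require Import structures.
From mathcomp Require Import all_boot all_order all_algebra.
From mathcomp Require Import all_classical all_reals all_analysis.
From mathcomp Require Import lra.
Import Order.TTheory GRing.Theory Num.Theory.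
Import numFieldNormedType.Exports.

Set Implicit Arguments.
Unset Strict Implicit.
Unset Printing Implicit Defensive.

Local Open Scope classical_set_scope.
Local Open Scope ring_scope.

(* Hurder's algebra consists of the bounded continuous f such that, for every
   single g, f - f o g vanishes at infinity (a word ball is finite).  Realise
   the compactification as the closure of X in a product of copies of R indexed
   by this algebra.  Along a cocompact ultrafilter, x and g x have the same
   limit in every coordinate: this makes the extended action trivial on the
   corona and shows that continuous functions on the closure restrict to
   Hurder functions.  Conversely, if Gamma fixes the corona of L, then
   |h - h o g| is continuous on L and vanishes on the corona, so the set where
   it is at least e is a compact subset of X; thus h restricts to a Hurder
   function, and every such L is a quotient of the Hurder compactification. *)

Definition embedding (X L : topologicalType) (k : X -> L) : Prop :=
  [/\ continuous k, injective k &
   forall U : set X, open U -> exists V : set L, open V /\ k @` U = V `&` range k].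

Lemma embedding_compact_preimage (X L : topologicalType) (k : X -> L)
    (D : set L) :
  embedding k -> compact D -> D `<=` range k -> compact (k @^-1` D).
Proof.
move=> [kc kinj kopen] cD Dk F PF FD.
have [z [Dz clz]] := cD (k @ F) _ FD.
have [x0 _ kx0] := Dk z Dz.
exists x0; split; first by rewrite /= kx0.
move=> P N FP; rewrite nbhsE => -[U [oU Ux0] UN].
have [V [oV kUV]] := kopen U oU.
have : (k @` U) z by exists x0.
rewrite kUV => -[Vz _].
have FkP : F (k @^-1` (k @` P)) by apply: filterS FP => p Pp; exists p.
have [_ [[p Pp <-] Vkp]] := clz _ _ FkP (open_nbhs_nbhs (conj oV Vz)).
have : (V `&` range k) (k p) by split => //; exists p.
rewrite -kUV => -[u Uu /kinj up].
by exists p; split => //; apply: UN; rewrite -up.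
Qed.

Lemma set_val_embedding (T : topologicalType) (A : set T) :
  embedding (set_val : set_type A -> T).
Proof.
split; [exact: initial_continuous | exact: val_inj |].
move=> _ [W oW <-]; exists W; split => //.
apply/seteqP; split => [_ [u Wu <-]|p [Wp [u _ up]]]; first by split => //; exists u.
by exists u; rewrite /= up.
Qed.

Lemma compact_set_type (T : topologicalType) (A : set T) :
  compact A -> compact [set: set_type A].
Proof.
move=> cA; have <- : set_val @^-1` A = [set: set_type A].
  by apply/seteqP; split => // u _; exact: set_valP.
apply: embedding_compact_preimage (set_val_embedding A) cA _ => p Ap.
by exists (exist _ p (mem_set Ap)).
Qed.

Lemma hausdorff_injective (X Y : topologicalType) (f : X -> Y) :
  continuous f -> injective f -> hausdorff_space Y -> hausdorff_space X.
Proof.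
move=> fc finj hY x y cl; apply: finj; apply: hY => B1 B2 N1 N2.
have [z [B1z B2z]] := cl _ _ (fc x _ N1) (fc y _ N2).
by exists (f z).
Qed.

Lemma dense_continuous_eq (X K L : topologicalType) (j : X -> K)
    (u v : K -> L) :
  hausdorff_space L -> dense (range j) -> continuous u -> continuous v ->
  (forall x, u (j x) = v (j x)) -> u =1 v.
Proof.
move=> hL dj uc vc uv y; apply: hL => A B NA NB.
have : nbhs y (u @^-1` A `&` v @^-1` B) by apply: filterI; [exact: uc|exact: vc].
rewrite nbhsE; case=> O [oO Oy] OAB.
have [z [Ojx [x _ jxz]]] : O `&` range j !=set0 by apply: dj => //; exists y.
rewrite -jxz in Ojx; have [Au Bv] := OAB _ Ojx.
by exists (u (j x)); split => //; rewrite uv.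
Qed.

Lemma ultra_fmap (T U : Type) (f : T -> U) (F : set_system T) :
  UltraFilter F -> UltraFilter (f @ F).
Proof.
move=> FU; split; first exact: fmap_proper_filter.
move=> G PG sFG; rewrite predeqE => B; split; last exact: sFG.
move=> GB; have [//|FnB] := in_ultra_setVsetC (f @^-1` B) FU.
have GnB : G (~` B) by apply: sFG; rewrite /= preimage_setC.
by have /filter_ex [? []] : G (B `&` ~` B) by exact: filterI.
Qed.

Lemma compact_ultra_cvg (T K : topologicalType) (U : set_system T) (u : T -> K) :
  compact [set: K] -> UltraFilter U -> exists q : K, u @ U --> q.
Proof.
rewrite compact_ultra => cK UU.
by have [q [_ uq]] := cK _ (ultra_fmap u UU) filterT; exists q.
Qed.

Lemma dense_range_ultra_cvg (X K : topologicalType) (j : X -> K) (y : K) :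
  dense (range j) -> exists U : set_system X, UltraFilter U /\ j @ U --> y.
Proof.
move=> dj; pose Fy := filter_from (nbhs y) (fun V => j @^-1` V).
have FFy : Filter Fy.
  apply: filter_from_filter; first by exists setT; exact: filterT.
  by move=> V W NV NW; exists (V `&` W); first exact: filterI.
have PFy : ProperFilter Fy.
  apply: filter_from_proper => V; rewrite nbhsE; case=> O [oO Oy] OV.
  have [z [Ojx [x _ jxz]]] : O `&` range j !=set0 by apply: dj => //; exists y.
  by rewrite -jxz in Ojx; exists x; exact: OV.
have [U [UU sFU]] := ultraFilterLemma PFy.
by exists U; split => // W NW; apply: sFU; exists W.
Qed.

Definition cocompact (X : topologicalType) (F : set_system X) : Prop :=
  forall C, compact C -> F (~` C).

Lemma ultra_cvg_cocompact (X K : topologicalType) (j : X -> K)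
    (U : set_system X) (y : K) :
  hausdorff_space K -> continuous j -> UltraFilter U -> j @ U --> y ->
  ~ range j y -> cocompact U.
Proof.
move=> hK jc UU jU ny C cC.
have [UC|//] := in_ultra_setVsetC C UU; exfalso.
have cjC : compact (j @` C).
  by apply: continuous_compact => //; exact: continuous_subspaceT.
have cl : closure (j @` C) y.
  move=> B NB; have /filter_ex [x [Cx Bjx]] : U (C `&` j @^-1` B).
    by apply: filterI; [exact: UC | exact: jU].
  by exists (j x); split => //; exists x.
by apply: ny; have [x _ <-] := compact_closed hK cjC cl; exists x.
Qed.

Section RealFunctions.
Context (R : realType).

Lemma compact_completely_regular (L : topologicalType) :
  hausdorff_space L -> compact [set: L] -> completely_regular_space L.
Proof.
move=> hL cL; apply: (@normal_completely_regular R); first exact: compact_normal.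
exact: hausdorff_accessible.
Qed.

Lemma completely_regular_open_sep (L : topologicalType) :
  completely_regular_space L -> forall (z : L) (W : set L), open W -> W z ->
  exists h : L -> R, [/\ continuous h, h z = 0,
    forall w, ~ W w -> h w = 1 & forall w, 0 <= h w <= 1].
Proof.
move=> crs z W oW Wz.
have /(uniform_separatorP (R := R)) [h [hc h01 h0 h1]] :=
  crs z (~` W) (open_closedC oW) (fun nW => nW Wz).
exists h; split => //.
- by apply: h0; exists z.
- by move=> w nWw; apply: h1; exists w.
- by move=> w; have := h01 (h w) (ex_intro2 _ _ w I erefl); rewrite /= in_itv.
Qed.

Lemma continuous_sep_points (L : topologicalType) :
  hausdorff_space L -> completely_regular_space L ->
  forall z w : L, z <> w -> exists h : L -> R, continuous h /\ h z <> h w.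
Proof.
move=> hL crs z w zw.
have cw : closed [set w] := accessible_closed_set1 (hausdorff_accessible hL) (x := w).
have [h [hc hz hw _]] := completely_regular_open_sep crs (closed_openC cw) zw.
by exists h; split => //; rewrite hz hw //= => /esym/eqP; rewrite oner_eq0.
Qed.

Lemma compact_continuous_bounded (L : topologicalType) (h : L -> R) :
  compact [set: L] -> continuous h -> exists M, forall z, `|h z| <= M.
Proof.
move=> cL hc.
have ci : compact (h @` setT).
  by apply: continuous_compact => //; exact: continuous_subspaceT.
have [M _ HM] := ex_strict_bound_gt0 (compact_bounded ci).
by exists M => z; apply: ltW; apply: HM; exists z.
Qed.

Lemma vanishes_at_infinityP (X : topologicalType) (h : X -> R) :
  vanishes_at_infinity h <->
  forall U : set_system X, UltraFilter U -> cocompact U -> h @ U --> 0.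
Proof.
split=> [h0 U UU Uco | hU e e0].
  apply/cvgrPdist_lt => e e0; have [C [cC HC]] := h0 e e0.
  by apply: filterS (Uco C cC) => x /HC; rewrite sub0r normrN.
apply: contrapT => nex.
pose bad C := [set x | ~ C x /\ e <= `|h x|].
have PF : ProperFilter (filter_from [set C | compact C] bad).
  apply: filter_from_proper; last first.
    move=> C cC; apply: contrapT => nb; apply: nex; exists C; split => // x nCx.
    by rewrite ltNge; apply/negP => le; apply: nb; exists x.
  apply: filter_from_filter; first by exists set0; exact: compact0.
  move=> C1 C2 cC1 cC2; exists (C1 `|` C2); first exact: compactU.
  by move=> x [nC hx]; split; split => // Cx; apply: nC; [left|right].
have [U [UU sFU]] := ultraFilterLemma PF.
have PU : ProperFilter U by exact: ultra_proper.
have Ubad : U [set x | e <= `|h x|] by apply: sFU; exists set0 => // x [].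
have Uco : cocompact U by move=> C cC; apply: sFU; exists C => // x [].
have clo : closed [set t : R | e <= `|t|].
  have H := (continuous_closedP (@Num.Def.normr R R)).1 (@norm_continuous R R^o).
  exact: (H _ (@closed_ge R e)).
have := closed_cvg _ clo Ubad _ (hU U UU Uco).
by move=> /(_ PU); rewrite /= normr0 leNgt e0.
Qed.

End RealFunctions.

Section Words.
Context (G : groupType) (S : seq G).

Fixpoint words (n : nat) : seq (seq G) :=
  if n is n'.+1 then [::] :: [seq s :: w | s <- S, w <- words n'] else [:: [::]].

Lemma mem_words (n : nat) (w : seq G) :
  all (fun s => s \in S) w -> (size w <= n)%N -> w \in words n.
Proof.
elim: n w => [|n IH] [|s w] //= /andP[sS wS] szw; rewrite inE; apply/orP; right.
by apply: (allpairs_f (fun s w => s :: w)) => //; exact: IH.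
Qed.

Definition word_ball (R : realType) (r : R) : seq G :=
  map (@word_prod G) (words (Num.truncn r)).

Lemma mem_word_ball (R : realType) (r : R) (g : G) :
  wordlen_le S r g -> g \in word_ball r.
Proof.
move=> [w [wS <- wsz]]; apply: map_f; apply: mem_words => //.
by rewrite truncn_ge_nat // (le_trans _ wsz).
Qed.

End Words.

Section Variation.
Context (R : realType) (G : groupType) (X : topologicalType)
  (a : G -> X -> X) (S : seq G) (f : X -> R) (M : R).
Hypothesis fM : forall y, `|f y| <= M.

Lemma le_Gvar (r : R) (x : X) (g : G) :
  wordlen_le S r g -> `|f x - f (a g x)| <= Gvar a S r f x.
Proof.
move=> gr; apply: sup_upper_bound; last by exists g.
split; first by exists `|f x - f (a g x)|, g.
exists (M + M) => _ [h _ <-].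
by apply: le_trans (ler_normB _ _) _; exact: lerD.
Qed.

Lemma Gvar_ge0 (r : R) (x : X) : 0 <= r -> 0 <= Gvar a S r f x.
Proof.
move=> r0; apply: le_trans (normr_ge0 _) (le_Gvar (g := 1%g) x _).
by exists [::].
Qed.

Lemma Gvar_le (r c : R) (x : X) :
  0 <= r -> (forall g, wordlen_le S r g -> `|f x - f (a g x)| <= c) ->
  Gvar a S r f x <= c.
Proof.
move=> r0 H; apply: ge_sup; last by move=> _ [g gr <-]; exact: H.
by exists `|f x - f (a 1%g x)|, 1%g => //; exists [::].
Qed.

End Variation.

Section Vanishing.
Context (R : realType) (X : topologicalType).

Lemma vanishes_at_infinity_comp (h : X -> R) (p q : X -> X) :
  continuous q -> cancel p q ->
  vanishes_at_infinity h -> vanishes_at_infinity (h \o p).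
Proof.
move=> qc pK h0 e e0; have [C [cC HC]] := h0 e e0.
exists (q @` C); split.
  by apply: continuous_compact => //; exact: continuous_subspaceT.
by move=> x nCx; apply: HC => Cpx; apply: nCx; exists (p x).
Qed.

Lemma vanishes_at_infinity_seq (I : eqType) (h : I -> X -> R) (l : seq I) :
  (forall i, vanishes_at_infinity (h i)) ->
  forall e, 0 < e -> exists C : set X, compact C /\
    forall i, i \in l -> forall x, ~ C x -> `|h i x| < e.
Proof.
move=> h0 e e0; elim: l => [|i l [C [cC HC]]].
  by exists set0; split => //; exact: compact0.
have [Ci [cCi HCi]] := h0 i e e0.
exists (Ci `|` C); split; first exact: compactU.
move=> j; rewrite inE => /orP[/eqP ->|jl] x nx.
  by apply: HCi => ?; apply: nx; left.
by apply: HC => // ?; apply: nx; right.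
Qed.

End Vanishing.

Section HurderFunctions.
Context (R : realType) (G : groupType) (X : topologicalType)
  (a : G -> X -> X) (S : seq G).
Hypothesis hS : symmetric_generating S.

Local Notation hurder := (@hurder_fun R G X a S).

Lemma hurder_bounded (f : X -> R) : hurder f -> exists M, forall x, `|f x| <= M.
Proof. by case=> [[_ H] _]. Qed.

Lemma hurder_funP (f : X -> R) : hurder f <->
  bounded_continuous f /\
  forall g, vanishes_at_infinity (fun x => f x - f (a g x)).
Proof.
split=> [hf | [[fc [M fM]] f0]].
  split => [|g e e0]; first exact: hf.1.
  have [M fM] := hurder_bounded hf; have [w [wS wg]] := hS.2 g.
  have r0 : 0 < (size w)%:R + 1 :> R by rewrite ltr_wpDl.
  have [C [cC HC]] := hf.2 _ r0 e e0.
  exists C; split => // x /HC; apply: le_lt_trans.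
  apply: le_trans (le_Gvar a fM x _) (ler_norm _).
  by exists w; split => //; rewrite lerDl.
split=> [|r r0 e e0]; first by split => //; exists M.
have e20 : 0 < e / 2 by rewrite divr_gt0.
have [C [cC HC]] := vanishes_at_infinity_seq (word_ball S r) f0 e20.
exists C; split => // x nCx.
rewrite ger0_norm; last by apply: (Gvar_ge0 a S fM); exact: ltW.
apply: le_lt_trans (_ : _ <= e / 2) _; last by rewrite ltr_pdivrMr //; lra.
apply: Gvar_le; first exact: ltW.
by move=> g /mem_word_ball gr; apply/ltW/HC.
Qed.

Lemma hurder_shift_vanishes (f : X -> R) (g : G) :
  hurder f -> vanishes_at_infinity (fun x => f x - f (a g x)).
Proof. by move=> /hurder_funP[_]. Qed.

Hypothesis hact : is_action a.
Hypothesis hcont : forall g, continuous (a g).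

Lemma hurder_comp (f : X -> R) (g : G) : hurder f -> hurder (f \o a g).
Proof.
move=> /hurder_funP[[fc [M fM]] f0]; apply/hurder_funP; split.
  split; last by exists M => x; exact: fM.
  by move=> x; apply: continuous_comp; [exact: hcont|exact: fc].
move=> h; have gK : cancel (a g) (a g^-1%g).
  by move=> x; rewrite -hact.2 mulVg hact.1.
suff -> : (fun x => (f \o a g) x - (f \o a g) (a h x)) =
          (fun y => f y - f (a (g * h * g^-1)%g y)) \o a g.
  exact: vanishes_at_infinity_comp (@hcont g^-1%g) gK (f0 _).
by apply/funext => x /=; rewrite -!hact.2 mulgVK.
Qed.

End HurderFunctions.

Section CompactExtension.
Context (R : realType) (X K L : topologicalType) (j : X -> K) (k : X -> L)
  (A : (X -> R) -> Prop).
Hypothesis dj : dense (range j).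
Hypothesis extA : forall f, A f -> exists g : K -> R, continuous g /\ f = g \o j.
Hypothesis hL : hausdorff_space L.
Hypothesis cL : compact [set: L].
Hypothesis Ak : forall h : L -> R, continuous h -> A (h \o k).

Lemma ultra_limits (y : K) : exists z : L, exists U : set_system X,
  [/\ UltraFilter U, j @ U --> y & k @ U --> z].
Proof.
have [U [UU jU]] := dense_range_ultra_cvg y dj.
by have [z kz] := compact_ultra_cvg k cL UU; exists z, U.
Qed.

Variable phi : K -> L.
Hypothesis phi_lim : forall y, exists U : set_system X,
  [/\ UltraFilter U, j @ U --> y & k @ U --> phi y].

Lemma ultra_limit_agree (h : L -> R) (g : K -> R) :
  continuous h -> continuous g -> h \o k = g \o j -> h \o phi =1 g.
Proof.
move=> hc gc hkgj y; have [U [UU jU kU]] := phi_lim y.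
have PU : ProperFilter U by exact: ultra_proper.
have c1 : (h \o k) @ U --> h (phi y) by apply: cvg_comp kU _; exact: hc.
have c2 : (g \o j) @ U --> g y by apply: cvg_comp jU _; exact: gc.
by rewrite hkgj in c1; exact: norm_cvg_unique c1 c2.
Qed.

Lemma ultra_limit_extends (x : X) : phi (j x) = k x.
Proof.
apply: contrapT => neq.
have [h [hc hne]] := continuous_sep_points R hL (compact_completely_regular R hL cL) neq.
have [g [gc hg]] := extA (Ak hc).
apply: hne; have /= -> := ultra_limit_agree hc gc hg (j x).
by have /= -> := congr1 (fun f => f x) hg.
Qed.

Lemma ultra_limit_continuous : continuous phi.
Proof.
move=> y W /=; rewrite nbhsE; case=> O [oO Oy] OW.
have crsL := compact_completely_regular R hL cL.
have [h [hc h0 h1 _]] := completely_regular_open_sep R crsL oO Oy.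
have [g [gc hg]] := extA (Ak hc).
have agree := ultra_limit_agree hc gc hg.
have gy : g y = 0 by rewrite -agree /= h0.
have e0 : (0 : R) < 1 / 2 by lra.
have := (@cvgrPdist_lt _ _ _ _ (nbhs_filter y) g (g y)).1 (gc y) _ e0.
apply: filterS => y' /=; rewrite gy sub0r normrN -agree /= => hlt.
apply: OW; apply: contrapT => nO.
by move: hlt; rewrite h1 // normr1; lra.
Qed.

End CompactExtension.

Lemma compact_extension (R : realType) (X K L : topologicalType) (j : X -> K)
    (k : X -> L) (A : (X -> R) -> Prop) :
  dense (range j) ->
  (forall f, A f -> exists g : K -> R, continuous g /\ f = g \o j) ->
  hausdorff_space L -> compact [set: L] ->
  (forall h : L -> R, continuous h -> A (h \o k)) ->
  exists phi : K -> L, continuous phi /\ forall x, phi (j x) = k x.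
Proof.
move=> dj extA hL cL Ak.
have [phi phi_lim] := choice (ultra_limits k dj cL).
exists phi; split; first exact: (ultra_limit_continuous extA hL cL Ak phi_lim).
exact: (ultra_limit_extends extA hL cL Ak phi_lim).
Qed.

Lemma dense_extension_action (G : groupType) (X K : topologicalType)
    (a : G -> X -> X) (j : X -> K) (b : G -> K -> K) :
  is_action a -> hausdorff_space K -> dense (range j) ->
  (forall g, continuous (b g)) -> (forall g x, b g (j x) = j (a g x)) ->
  is_action b.
Proof.
move=> [a1 aM] hK dj bc bj; split.
  apply: (dense_continuous_eq hK dj (bc 1%g) (fun y => @cvg_id _ (nbhs y))) => x.
  by rewrite bj a1.
move=> g h; apply: (dense_continuous_eq hK dj (bc _)) => [y|x /=].
  by apply: continuous_comp; exact: bc.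
by rewrite !bj aM.
Qed.

Section HurderCorona.
Context (R : realType) (G : groupType) (X : topologicalType)
  (a : G -> X -> X) (S : seq G).
Hypothesis hS : symmetric_generating S.
Hypothesis hact : is_action a.
Hypothesis hcont : forall g, continuous (a g).

Local Notation hurder := (@hurder_fun R G X a S).

Lemma hurder_trivial_on_corona (K : topologicalType) (j : X -> K)
    (b : G -> K -> K) :
  compactification j -> determined_by j hurder ->
  (forall g, continuous (b g)) -> (forall g x, b g (j x) = j (a g x)) ->
  trivial_on_corona j b.
Proof.
move=> [cK hK jc _ dj] det bc bj g y ny; apply: contrapT => ne.
have [h [hc hne]] :=
  continuous_sep_points R hK (compact_completely_regular R hK cK) (nesym ne).
have Uhj : hurder (h \o j) by apply/det; exists h.
have [U [UU jU]] := dense_range_ultra_cvg y dj.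
have PU : ProperFilter U by exact: ultra_proper.
have c0 := (vanishes_at_infinityP _).1 (hurder_shift_vanishes hS g Uhj) U UU
  (ultra_cvg_cocompact hK jc UU jU ny).
have c1 : (h \o j) @ U --> h y by apply: cvg_comp jU _; exact: hc.
have c2 : (h \o j \o a g) @ U --> h (b g y).
  have -> : h \o j \o a g = h \o b g \o j by apply/funext => x /=; rewrite bj.
  by apply: cvg_comp jU _; apply: continuous_comp; [exact: bc|exact: hc].
apply: hne; apply/eqP; rewrite -subr_eq0; apply/eqP.
have c3 := cvgB c1 c2; have FU : Filter U by exact: PU.
exact: norm_cvg_unique (c3 FU) c0.
Qed.

Lemma hurder_extends_action (K : topologicalType) (j : X -> K) :
  compactification j -> determined_by j hurder ->
  exists b : G -> K -> K, extends_action a j b /\ trivial_on_corona j b.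
Proof.
move=> cj det; have [cK hK _ _ dj] := cj.
have extj g : exists bg : K -> K, continuous bg /\ forall x, bg (j x) = j (a g x).
  apply: (@compact_extension R X K K j (j \o a g) hurder dj _ hK cK).
    by move=> f /det.
  by move=> h hc; apply: (hurder_comp hS hact hcont (f := h \o j)); apply/det; exists h.
have [b /all_and2[bc bj]] := choice extj.
exists b; split; last exact: hurder_trivial_on_corona.
by split => //; split => //; exact: dense_extension_action bc bj.
Qed.

Lemma hurder_comp_of_trivial_corona (L : topologicalType) (k : X -> L)
    (c : G -> L -> L) (h : L -> R) :
  compactification k -> extends_action a k c -> trivial_on_corona k c ->
  continuous h -> hurder (h \o k).
Proof.
move=> [cL hL kc [kinj kemb] _] [[_ cc] ck] ctriv hc.
have [M hM] := compact_continuous_bounded cL hc.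
apply/hurder_funP => //; split.
  split; last by exists M => x; exact: hM.
  by move=> x; apply: continuous_comp; [exact: kc|exact: hc].
move=> g e e0.
pose u z := `|h z - h (c g z)|.
have uc : continuous u.
  move=> z; apply: cvg_norm; apply: cvgB; first exact: hc.
  by apply: continuous_comp; [exact: cc|exact: hc].
pose D := u @^-1` [set t | e <= t].
have cD : compact D.
  apply: (subclosed_compact _ cL) => //.
  by move: uc => /continuous_closedP; apply; exact: closed_ge.
have Dk : D `<=` range k.
  move=> z Dz; apply: contrapT => nz; move: Dz.
  by rewrite /D /u /= ctriv // subrr normr0 leNgt e0.
exists (k @^-1` D); split; first exact: embedding_compact_preimage.
by move=> x; rewrite /D /u /= -ck ltNge => /negP.
Qed.

End HurderCorona.

Lemma dense_range_corestriction (Y T : topologicalType) (e : Y -> T)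
    (j : Y -> set_type (closure (range e))) :
  (forall y, set_val (j y) = e y) -> dense (range j).
Proof.
move=> je O [p Op] [W oW WO]; rewrite -WO in Op *.
have : closure (range e) (set_val p) by exact: set_valP.
move=> /(_ W (open_nbhs_nbhs (conj oW Op))).
by move=> [_ [[y _ <-] Wey]]; exists (j y); split; [rewrite /= je | exists y].
Qed.

Section HurderCompactification.
Context (R : realType) (G : groupType) (X : topologicalType)
  (a : G -> X -> X) (S : seq G).
Hypothesis hS : symmetric_generating S.
Hypothesis hact : is_action a.
Hypothesis hcont : forall g, continuous (a g).
Hypothesis hX : hausdorff_space X.
Hypothesis lcX : locally_compact [set: X].

Local Notation hurder := (@hurder_fun R G X a S).

Lemma hurder_bump (x : X) (U : set X) : open U -> U x ->
  exists phi : X -> R, [/\ hurder phi, phi x = 1 & forall y, ~ U y -> phi y = 0].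
Proof.
move=> oU Ux.
have crsX := @locally_compact_completely_regular X R lcX hX.
have [B] := @lcX x I; rewrite withinET => Bx [cB _].
have : nbhs x (U `&` B) by apply: filterI => //; exact: open_nbhs_nbhs.
rewrite nbhsE; case=> O [oO Ox] OUB.
have [h [hc h0 h1 h01]] := completely_regular_open_sep R crsX oO Ox.
have h1out y : ~ B y -> h y = 1 by move=> nBy; apply: h1 => /OUB[].
exists (fun y => 1 - h y); split; last 2 first.
- by rewrite h0 subr0.
- by move=> y nUy; rewrite h1 ?subrr // => /OUB[].
apply/hurder_funP => //; split.
  split; first by move=> y; apply: cvgB; [exact: cvg_cst|exact: hc].
  exists 1 => y; have /andP[? ?] := h01 y.
  by rewrite ler_norml; apply/andP; split; lra.
move=> g e e0; exists (B `|` a g^-1%g @` B); split.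
  apply: compactU => //; apply: continuous_compact => //.
  exact: continuous_subspaceT.
move=> y nBy; rewrite h1out; last by move=> By; apply: nBy; left.
rewrite h1out ?subrr ?normr0 // => Bgy; apply: nBy; right.
by exists (a g y) => //; rewrite -hact.2 mulVg hact.1.
Qed.

Definition hurder_index : topologicalType := set_type (hurder : set {ptws X -> R}).

Local Notation PT := (prod_topology (fun _ : hurder_index => R)).

Definition hurder_eval (x : X) : PT := fun f => set_val f x.

Definition hurder_hull : set PT := closure (range hurder_eval).

Definition hurder_space : topologicalType := set_type hurder_hull.

Definition hurder_embed (x : X) : hurder_space :=
  exist _ (hurder_eval x) (mem_set (subset_closure (ex_intro2 _ _ x I erefl))).

Definition hurder_coord (f : hurder_index) (p : hurder_space) : R := set_val p f.

Lemma hurder_coordE (f : hurder_index) (x : X) :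
  hurder_coord f (hurder_embed x) = set_val f x.
Proof. by []. Qed.

Lemma hurder_coord_continuous (f : hurder_index) : continuous (hurder_coord f).
Proof.
move=> p; have vp : (set_val : hurder_space -> PT) @ p --> set_val p.
  exact: initial_continuous.
exact: cvg_comp vp (@proj_continuous _ (fun=> R) _ (set_val p)).
Qed.

Lemma hurder_eval_continuous : continuous hurder_eval.
Proof.
move=> x; apply/(@pointwise_cvgP hurder_index R^o) => f.
have [[fc _] _] : hurder (set_val f) by exact: set_valP.
exact: fc.
Qed.

Lemma compact_hurder_hull : compact hurder_hull.
Proof.
have [M HM] := choice (fun f : hurder_index => hurder_bounded (set_valP f)).
pose box := [set p : PT | forall f, `[- M f, M f]%classic (p f)].
have cbox : compact box := tychonoff (fun f => @segment_compact R _ _).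
have hP : hausdorff_space PT := hausdorff_product (fun _ => @norm_hausdorff _ _).
apply: (subclosed_compact _ cbox); first exact: closed_closure.
rewrite [box](closure_id _).1; last exact: compact_closed.
apply: closureS => _ [x _ <-] f.
by rewrite /= in_itv /= -ler_norml; exact: HM.
Qed.

Lemma hurder_embed_continuous : continuous hurder_embed.
Proof.
move=> x N; rewrite nbhsE => -[_ [[W oW <-] Wx] WN].
apply: (@filterS _ _ _ (hurder_eval @^-1` W)); first by move=> y Wy; exact: WN.
by apply: hurder_eval_continuous; exact: open_nbhs_nbhs.
Qed.

Lemma hurder_embed_injective : injective hurder_embed.
Proof.
move=> x y exy; apply: contrapT => xy.
have cy : closed [set y] := accessible_closed_set1 (hausdorff_accessible hX) (x := y).
have [phi [Aphi phix phiy]] := hurder_bump (closed_openC cy) xy.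
have := congr1 (hurder_coord (exist _ phi (mem_set Aphi))) exy.
rewrite !hurder_coordE !set_valE /= phix phiy; last by move=> /(_ erefl).
by move=> /eqP; rewrite oner_eq0.
Qed.

Lemma hurder_embed_open (U : set X) : open U ->
  exists V : set hurder_space, open V /\ hurder_embed @` U = V `&` range hurder_embed.
Proof.
move=> oU.
pose W := [set p : PT | exists2 f : hurder_index,
  (forall y, ~ U y -> set_val f y = 0) & 1 / 2 < p f].
have oW : open W.
  rewrite openE => p [f fU pf].
  have : nbhs p ((fun q : PT => q f) @^-1` [set t | 1 / 2 < t]).
    by apply: proj_continuous; apply: open_nbhs_nbhs; split => //; exact: open_gt.
  by apply: filterS => q qf; exists f.
exists (set_val @^-1` W); split; first by exists W.
apply/seteqP; split.
  move=> _ [x Ux <-]; split; last by exists x.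
  have [phi [Aphi phix phiU]] := hurder_bump oU Ux.
  exists (exist _ phi (mem_set Aphi)) => //=.
  by rewrite /hurder_embed !set_valE /= /hurder_eval set_valE /= phix; lra.
move=> p [[f fU pf] [x _ px]]; exists x => //.
rewrite -px /hurder_embed !set_valE /= /hurder_eval set_valE /= in pf.
by apply: contrapT => nUx; move: pf; rewrite -set_valE fU //; lra.
Qed.

Lemma hurder_compactification : compactification hurder_embed.
Proof.
have [svc svi _] := set_val_embedding hurder_hull.
split.
- exact: compact_set_type compact_hurder_hull.
- apply: hausdorff_injective svc svi _.
  exact: hausdorff_product (fun _ => @norm_hausdorff _ _).
- exact: hurder_embed_continuous.
- by split; [exact: hurder_embed_injective | exact: hurder_embed_open].
- exact: dense_range_corestriction.
Qed.

Lemma hurder_embed_shift_eq (U : set_system X) (g : G) (p q : hurder_space) :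
  UltraFilter U -> cocompact U -> hurder_embed @ U --> p ->
  (hurder_embed \o a g) @ U --> q -> p = q.
Proof.
move=> UU Uco jp jq; have PU : ProperFilter U by exact: ultra_proper.
apply: val_inj; apply/funext => f.
have Af : hurder (set_val f) by exact: set_valP.
have c1 := cvg_comp _ _ jp (@hurder_coord_continuous f p).
have c2 := cvg_comp _ _ jq (@hurder_coord_continuous f q).
have c0 := (vanishes_at_infinityP _).1 (hurder_shift_vanishes hS g Af) U UU Uco.
have c3 := cvgB c1 c2; have FU : Filter U by exact: PU.
apply/eqP; rewrite -subr_eq0; apply/eqP.
exact: norm_cvg_unique (c3 FU) c0.
Qed.

Lemma hurder_comp_embed (h : hurder_space -> R) :
  continuous h -> hurder (h \o hurder_embed).
Proof.
move=> hc; have cK := compact_set_type compact_hurder_hull.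
have [M hM] := compact_continuous_bounded cK hc.
apply/hurder_funP => //; split.
  split; last by exists M => x; exact: hM.
  by move=> x; apply: continuous_comp; [exact: hurder_embed_continuous|exact: hc].
move=> g; apply/vanishes_at_infinityP => U UU Uco.
have PU : ProperFilter U by exact: ultra_proper.
have [p jp] := compact_ultra_cvg hurder_embed cK UU.
have [q jq] := compact_ultra_cvg (hurder_embed \o a g) cK UU.
have c1 : (h \o hurder_embed) @ U --> h p by apply: cvg_comp jp _; exact: hc.
have c2 : (h \o (hurder_embed \o a g)) @ U --> h q by apply: cvg_comp jq _; exact: hc.
have := cvgB c1 c2; rewrite (hurder_embed_shift_eq UU Uco jp jq) subrr.
by move=> /(_ PU).
Qed.

Lemma hurder_determined : determined_by hurder_embed hurder.
Proof.
move=> f; split => [Af | [h [hc ->]]]; last exact: hurder_comp_embed.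
by exists (hurder_coord (exist _ f (mem_set Af))); split; first exact: hurder_coord_continuous.
Qed.

End HurderCompactification.

Theorem proposition4 (R : realType) (G : groupType) (X : topologicalType)
    (a : G -> X -> X) (S : seq G) :
  hausdorff_space X -> locally_compact [set: X] ->
  continuous_action a -> free_action a -> proper_action a ->
  symmetric_generating S ->
  (exists (K : topologicalType) (j : X -> K),
      compactification j /\ determined_by j (@hurder_fun R G X a S)) /\
  (forall (K : topologicalType) (j : X -> K),
    compactification j -> determined_by j (@hurder_fun R G X a S) ->
    (exists b : G -> K -> K, extends_action a j b /\ trivial_on_corona j b) /\
    (forall (L : topologicalType) (k : X -> L) (c : G -> L -> L),
       compactification k -> extends_action a k c -> trivial_on_corona k c ->
       exists phi : K -> L, continuous phi /\ (forall x, phi (j x) = k x))).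
Proof.
move=> hX lcX [hact hcont] _ _ hS; split.
  exists (hurder_space R a S), (hurder_embed R a S).
  split; first exact: hurder_compactification hS hact hcont hX lcX.
  exact: hurder_determined hS.
move=> K j cj det; split; first by have := hurder_extends_action hS hact hcont cj det.
move=> L k c ck ext triv; have [_ _ _ _ dj] := cj; have [cL hL _ _ _] := ck.
apply: (compact_extension (A := @hurder_fun R G X a S) dj _ hL cL).
  by move=> f /det.
by move=> h; exact: (hurder_comp_of_trivial_corona (R := R) hS ck ext triv).
Qed.
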